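(* Let $G$ be a finite simple graph on $n\ge1$ vertices. Then there is exactly one pair of nonnegative integers $(k,m)$ with $2k+m=n$ such that $G(k,m)$ lies in the same Clifford class as $G$, i.e. $\dim_{\mathbb{C}} Z(A_{G(k,m)})=\dim_{\mathbb{C}} Z(A_G)$.
   Context: All graphs are finite, with no loops and no multiple edges. For a graph $G$ with vertices numbered $1,\dots,n$, the Clifford graph algebra $A_G$ is the unital associative $\mathbb{C}$-algebra generated by $e_1,\dots,e_n$ subject to the relations $e_i^2=-1$ for all $i$; $e_ie_j=-e_je_i$ if $i\neq j$ and vertices $i,j$ are adjacent; and $e_ie_j=e_je_i$ if $i\ne j$ and vertices $i,j$ are not adjacent. $Z(A)$ denotes the center. Two graphs with the same number of vertices are in the same Clifford class if the centers of their Clifford graph algebras have the same dimension. For nonnegative integers $k,m$, $G(k,m)$ denotes the graph on $2k+m$ vertices that is the disjoint union of $k$ copies of $K_2$ (a single edge) and $m$ isolated vertices. *)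

From HB Require Import structures.
From mathcomp Require Import all_boot all_order all_algebra all_field.
Set Implicit Arguments. Unset Strict Implicit. Unset Printing Implicit Defensive.
Import Order.TTheory GRing.Theory Num.Theory.
Local Open Scope ring_scope.

Definition simple_graph (n : nat) (adj : rel 'I_n) : Prop :=
  (forall i j, adj i j = adj j i) /\ (forall i, adj i i = false).

(* Clifford graph algebra A_G over C (here: algC), realised on its monomial
   basis e_S = e_{s_1} ... e_{s_k} (s_1 < ... < s_k), S a set of vertices. *)
Definition cliff (n : nat) := {ffun {set 'I_n} -> algC^o}.

(* e_S e_T = (-1)^(|S∩T| + #{(s,t) in S×T | t < s, s~t}) e_(S Δ T) *)
Definition cliff_sign (n : nat) (adj : rel 'I_n) (S T : {set 'I_n}) : algC :=
  (-1) ^+ (#|S :&: T| +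
           #|[set p : 'I_n * 'I_n | [&& p.1 \in S, p.2 \in T,
                                        (p.2 < p.1)%N & adj p.1 p.2]]|)%N.

Definition symdiff (n : nat) (S T : {set 'I_n}) : {set 'I_n} :=
  (S :\: T) :|: (T :\: S).

Definition cliff_mul (n : nat) (adj : rel 'I_n) (x y : cliff n) : cliff n :=
  [ffun U => \sum_(S : {set 'I_n}) \sum_(T : {set 'I_n})
      (if symdiff S T == U then cliff_sign adj S T * x S * y T else 0)].

Definition cliff_gen (n : nat) (i : 'I_n) : cliff n :=
  [ffun S => if S == [set i] then 1 else 0].
Definition cliff_one (n : nat) : cliff n :=
  [ffun S => if S == set0 then 1 else 0].

Definition cliff_center (n : nat) (adj : rel 'I_n) : {vspace cliff n} :=
  lker (linfun (fun x : cliff n =>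
          linfun (fun y : cliff n => cliff_mul adj x y - cliff_mul adj y x))).

Definition dim_center (n : nat) (adj : rel 'I_n) : nat := \dim (cliff_center adj).

(* G(k,m): vertices 0..2k+m-1; edges {2j, 2j+1} for j < k; the last m vertices
   are isolated. *)
Definition Gkm (k m : nat) : rel 'I_(2 * k + m) :=
  fun i j => [&& (i < 2 * k)%N, (j < 2 * k)%N, i != j & (i./2 == j./2)].
Arguments Gkm : clear implicits.

From HB Require Import structures.
From mathcomp Require Import all_boot all_order all_algebra all_field.
From mathcomp Require Import ring zify.
Set Implicit Arguments. Unset Strict Implicit. Unset Printing Implicit Defensive.
Import GRing.Theory Num.Theory.

(* The monomials e_S form a basis of A_G, and the center is spanned by the
   monomials e_S commuting with every e_T.  Since e_S e_T = +-e_T e_S with the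
   sign given by the parity of the number of edges between S and T, these are
   the sets S in which every vertex has an even number of neighbours, i.e. the
   kernel of the adjacency matrix of G over F_2.  That matrix is alternating, so
   its rank is even: concretely, removing the two ends of an edge uv and
   pivoting G on uv is a bijection of kernels.  Hence dim Z(A_G) = 2^(n - 2r)
   for some r, while G(k,m) has kernel spanned by its m isolated vertices, so
   dim Z(A_G(k,m)) = 2^m and (k,m) = (r, n - 2r) is forced. *)

Local Open Scope ring_scope.

Section SymmetricDifference.
Variable n : nat.
Implicit Types S T : {set 'I_n}.

Lemma symdiffC S T : symdiff S T = symdiff T S.
Proof. by rewrite /symdiff setUC. Qed.

Lemma symdiffK T : involutive (symdiff T).
Proof. by move=> S; apply/setP=> x; rewrite !inE; case: (x \in S); case: (x \in T). Qed.

Lemma symdiffKr T : involutive (fun S => symdiff S T).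
Proof. by move=> S /=; rewrite symdiffC (symdiffC S) symdiffK. Qed.

End SymmetricDifference.

Section MonomialBasis.
Variables (n : nat) (adj : rel 'I_n).
Implicit Types (S T U W : {set 'I_n}) (x y z : cliff n).

Definition cliff_mono S : cliff n := [ffun U => if U == S then 1 else 0].

Lemma cliff_mul_monor x T W :
  cliff_mul adj x (cliff_mono T) W =
  cliff_sign adj (symdiff W T) T * x (symdiff W T).
Proof.
have inner S : \sum_T' (if symdiff S T' == W
      then cliff_sign adj S T' * x S * cliff_mono T T' else 0)
    = if symdiff S T == W then cliff_sign adj S T * x S else 0.
  rewrite (bigD1 T) //= ffunE eqxx mulr1 big1 ?addr0 // => T' /negbTE nT.
  by rewrite ffunE nT mulr0 if_same.
rewrite ffunE (eq_bigr _ (fun S _ => inner S)) -big_mkcond /=.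
rewrite (big_pred1 (symdiff W T)) // => S.
by rewrite /= (can2_eq (symdiffKr T) (symdiffKr T)).
Qed.

Lemma cliff_mul_monol T x W :
  cliff_mul adj (cliff_mono T) x W =
  cliff_sign adj T (symdiff T W) * x (symdiff T W).
Proof.
rewrite ffunE (bigD1 T) //= [X in _ + X]big1 => [|S /negbTE nS]; last first.
  by apply: big1 => T' _; rewrite ffunE nS mulr0 mul0r if_same.
rewrite addr0 -big_mkcond (big_pred1 (symdiff T W)) => [|S]; last first.
  by rewrite /= (can2_eq (symdiffK T) (symdiffK T)).
by rewrite ffunE eqxx mulr1.
Qed.

Lemma cliff_mono_expansion x : x = \sum_U x U *: cliff_mono U.
Proof.
apply/ffunP => W; rewrite sum_ffunE (bigD1 W) //= big1 => [|U /negbTE nU].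
  by rewrite !ffunE eqxx addr0 -[_ *: 1]/(x W * 1) mulr1.
by rewrite !ffunE eq_sym nU scaler0.
Qed.

Lemma free_monos (s : seq {set 'I_n}) : uniq s -> free [seq cliff_mono A | A <- s].
Proof.
move=> s_uniq; apply/(freeP (X := in_tuple _)) => c c_eq0 i.
have lt_i : (i < size s)%N by rewrite -(size_map cliff_mono); exact: ltn_ord.
have /(congr1 (fun f : cliff n => f (nth set0 s i))) := c_eq0.
rewrite sum_ffunE ffunE (bigD1 i) //= big1 => [|j ji].
  by rewrite !ffunE (nth_map set0) // ffunE eqxx addr0 -[_ *: 1]/(c i * 1) mulr1.
have lt_j : (j < size s)%N by rewrite -(size_map cliff_mono); exact: ltn_ord.
rewrite !ffunE (nth_map set0) // ffunE nth_uniq // val_eqE.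
by rewrite eq_sym (negbTE ji) scaler0.
Qed.

Lemma cliff_mulZDl a x y z :
  cliff_mul adj (a *: x + y) z = a *: cliff_mul adj x z + cliff_mul adj y z.
Proof.
apply/ffunP=> U; rewrite !ffunE scaler_sumr -big_split /=.
apply: eq_bigr => S _; rewrite scaler_sumr -big_split /=; apply: eq_bigr => T _.
by rewrite !ffunE; case: ifP => _; rewrite /GRing.scale /=; ring.
Qed.

Lemma cliff_mulZDr a x y z :
  cliff_mul adj x (a *: y + z) = a *: cliff_mul adj x y + cliff_mul adj x z.
Proof.
apply/ffunP=> U; rewrite !ffunE scaler_sumr -big_split /=.
apply: eq_bigr => S _; rewrite scaler_sumr -big_split /=; apply: eq_bigr => T _.
by rewrite !ffunE; case: ifP => _; rewrite /GRing.scale /=; ring.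
Qed.

End MonomialBasis.

Section Center.
Variables (n : nat) (adj : rel 'I_n).
Implicit Types (S T U : {set 'I_n}) (x y : cliff n).

Definition cliff_comm x y := cliff_mul adj x y - cliff_mul adj y x.

Lemma cliff_comm_linear_r x : linear (cliff_comm x).
Proof.
move=> a y z; rewrite /cliff_comm cliff_mulZDr cliff_mulZDl.
by rewrite scalerBr addrACA opprD.
Qed.

HB.instance Definition _ x :=
  GRing.isLinear.Build _ _ _ _ (cliff_comm x) (cliff_comm_linear_r x).

Definition cliff_commF x : 'End(cliff n) := linfun (cliff_comm x).

Lemma cliff_commF_linear : linear cliff_commF.
Proof.
move=> a x y; apply/lfunP => z; rewrite add_lfunE scale_lfunE !lfunE /= /cliff_comm.
by rewrite cliff_mulZDl cliff_mulZDr scalerBr addrACA opprD.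
Qed.

HB.instance Definition _ :=
  GRing.isLinear.Build _ _ _ _ cliff_commF cliff_commF_linear.

Lemma mem_cliff_center x :
  reflect (forall y, cliff_mul adj x y = cliff_mul adj y x) (x \in cliff_center adj).
Proof.
rewrite memv_ker (lfunE cliff_commF); apply: (iffP eqP) => [xC y | xC].
  have /eqP := congr1 (fun f : 'End(cliff n) => f y) xC.
  by rewrite lfunE zero_lfunE subr_eq0 => /eqP.
by apply/lfunP => y; rewrite lfunE zero_lfunE /= /cliff_comm xC subrr.
Qed.

Definition central_sets := [set S | [forall T, cliff_sign adj S T == cliff_sign adj T S]].

Lemma cliff_center_span :
  cliff_center adj = <<[seq cliff_mono A | A <- enum central_sets]>>%VS.
Proof.
apply/eqP; rewrite eqEsubv; apply/andP; split; last first.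
  apply/span_subvP => v /mapP[S]; rewrite mem_enum inE => /forallP SC ->.
  apply/mem_cliff_center => y; apply/ffunP => W.
  by rewrite cliff_mul_monol cliff_mul_monor symdiffC (eqP (SC _)).
apply/subvP => x /mem_cliff_center xC.
have x_central U : U \notin central_sets -> x U = 0.
  rewrite inE negb_forall => /existsP[T UT].
  have /(congr1 (fun f : cliff n => f (symdiff U T))) := xC (cliff_mono T).
  rewrite cliff_mul_monor cliff_mul_monol symdiffKr (symdiffC U) symdiffK => /eqP.
  by rewrite -subr_eq0 -mulrBl mulf_eq0 subr_eq0 (negbTE UT) => /eqP.
rewrite [x]cliff_mono_expansion (bigID (mem central_sets)) /=.
rewrite [X in _ + X]big1 => [|U /x_central ->]; last by rewrite scale0r.
rewrite addr0 memv_suml // => U U_central; apply/memvZ/memv_span/map_f.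
by rewrite mem_enum.
Qed.

Lemma dim_center_central_sets : dim_center adj = #|central_sets|.
Proof.
rewrite /dim_center cliff_center_span.
by rewrite (eqnP (free_monos (enum_uniq _))) size_map cardE.
Qed.

End Center.

Definition nbr_parity (T : finType) (adj : rel T) (A : {set T}) (t : T) : bool :=
  \big[addb/false]_(s in A) adj s t.

Definition even_sets (T : finType) (adj : rel T) (V : {set T}) : {set {set T}} :=
  [set A : {set T} | (A \subset V) && [forall t in V, ~~ nbr_parity adj A t]].

Lemma odd_sum (I : finType) (P : pred I) (F : I -> nat) :
  odd (\sum_(i | P i) F i) = \big[addb/false]_(i | P i) odd (F i).
Proof. exact: (big_morph _ oddD (erefl _)). Qed.

Lemma card_pairs (T : finType) (P : rel T) :
  #|[set p | P p.1 p.2]| = (\sum_s \sum_t P s t)%N.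
Proof.
rewrite -sum1_card pair_big big_mkcond /=.
by apply: eq_bigr => p _; rewrite inE; case: (P _ _).
Qed.

Section CentralSets.
Variables (n : nat) (adj : rel 'I_n).
Hypotheses (adjC : symmetric adj) (adj_irr : irreflexive adj).
Implicit Types A B : {set 'I_n}.

Definition cross_edges A B :=
  #|[set p : 'I_n * 'I_n | [&& p.1 \in A, p.2 \in B, (p.2 < p.1)%N & adj p.1 p.2]]|.

Lemma cross_edges_sym_sum A B :
  (cross_edges A B + cross_edges B A =
   \sum_s \sum_t [&& s \in A, t \in B & adj s t])%N.
Proof.
rewrite /cross_edges (card_pairs (fun s t => [&& s \in A, t \in B, (t < s)%N & adj s t])).
rewrite (card_pairs (fun s t => [&& s \in B, t \in A, (t < s)%N & adj s t])).
rewrite [X in (_ + X)%N]exchange_big -big_split.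
apply: eq_bigr => s _; rewrite -big_split; apply: eq_bigr => t _ /=.
rewrite (adjC t s); case: (ltngtP s t) => [||/val_inj->]; last first.
  by rewrite adj_irr !andbF.
all: by case: (s \in A); case: (t \in B); case: (adj s t).
Qed.

Lemma odd_cross_edges A B :
  odd (cross_edges A B + cross_edges B A) = \big[addb/false]_(t in B) nbr_parity adj A t.
Proof.
rewrite cross_edges_sym_sum odd_sum; under eq_bigr do rewrite odd_sum.
rewrite exchange_big /= [RHS]big_mkcond /=; apply: eq_bigr => t _.
rewrite /nbr_parity; case: (t \in B); last by rewrite big1 // => s _; rewrite andbF.
by rewrite [RHS]big_mkcond; apply: eq_bigr => s _; case: (s \in A); case: (adj s t).
Qed.

Lemma cliff_signC_parity A B :
  (cliff_sign adj A B == cliff_sign adj B A) =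
  ~~ \big[addb/false]_(t in B) nbr_parity adj A t.
Proof.
rewrite /cliff_sign -/(cross_edges A B) -/(cross_edges B A) setIC.
rewrite -signr_odd -[(-1) ^+ (_ + cross_edges B A)]signr_odd (inj_eq signr_inj).
rewrite -odd_cross_edges !oddD.
by case: (odd #|B :&: A|); case: (odd (cross_edges A B)); case: (odd (cross_edges B A)).
Qed.

Lemma central_setsE : central_sets adj = even_sets adj setT.
Proof.
apply/setP => A; rewrite !inE subsetT /=.
apply/forallP/forall_inP => [AC t _ | A_even B].
  by have := AC [set t]; rewrite cliff_signC_parity big_set1.
by rewrite cliff_signC_parity big1 // => t _; apply/negbTE/A_even.
Qed.

End CentralSets.

Local Close Scope ring_scope.

Section Pivot.
Variable T : finType.
Implicit Types (adj : rel T) (A V : {set T}).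

Lemma nbr_parityD1 adj A x t :
  nbr_parity adj A t = ((x \in A) && adj x t) (+) nbr_parity adj (A :\ x) t.
Proof.
have [xA|xNA] := boolP (x \in A); first by rewrite /nbr_parity (big_setD1 x xA).
by rewrite (setDidPl _) // disjoint_sym disjoints1.
Qed.

Lemma nbr_parityD2 adj A t u v : u != v ->
  nbr_parity adj A t =
  nbr_parity adj (A :\ u :\ v) t (+) ((u \in A) && adj u t) (+) ((v \in A) && adj v t).
Proof.
move=> uv; rewrite (nbr_parityD1 adj A u) (nbr_parityD1 adj (A :\ u) v) !inE eq_sym uv /=.
by case: (u \in A); case: (v \in A); case: (adj u t); case: (adj v t); case: nbr_parity.
Qed.

(* Pivoting on the edge uv: on adjacency matrices over F_2 this is the Schur
   complement of the invertible 2x2 block on {u, v}. *)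
Definition pivot adj (u v : T) : rel T :=
  fun x y => adj x y (+) (adj x u && adj v y) (+) (adj x v && adj u y).

Lemma nbr_parity_pivot adj u v A t :
  nbr_parity (pivot adj u v) A t =
  nbr_parity adj A t (+) (nbr_parity adj A u && adj v t)
                     (+) (nbr_parity adj A v && adj u t).
Proof. by rewrite /nbr_parity /pivot !big_split /= !big_distrl. Qed.

Lemma pivot_sym adj u v : symmetric adj -> symmetric (pivot adj u v).
Proof.
move=> adjC x y; rewrite /pivot (adjC y x) (adjC y u) (adjC v x) (adjC y v) (adjC u x).
by case: (adj x y); case: (adj u y); case: (adj x v); case: (adj v y); case: (adj x u).
Qed.

Lemma pivot_irr adj u v : symmetric adj -> irreflexive adj -> irreflexive (pivot adj u v).
Proof.
move=> adjC adj_irr x; rewrite /pivot adj_irr (adjC v x) (adjC u x).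
by case: (adj x u); case: (adj x v).
Qed.

Lemma even_sets_edgeless adj V :
  {in V &, forall u v, adj u v = false} -> even_sets adj V = powerset V.
Proof.
move=> noedge; apply/setP => A; rewrite !inE; have [AV|//] := boolP (A \subset V).
apply/forall_inP => t tV; rewrite /nbr_parity big1 // => s sA.
by apply: noedge => //; apply: (subsetP AV).
Qed.

End Pivot.

Section PivotBijection.
Variables (T : finType) (adj : rel T).
Hypotheses (adjC : symmetric adj) (adj_irr : irreflexive adj).
Variables (V : {set T}) (u v : T).
Hypotheses (uV : u \in V) (vV : v \in V) (uv_adj : adj u v).

Let V' := V :\ u :\ v.
Let adj' := pivot adj u v.

Let u_neq_v : u != v.
Proof. by apply: contraTneq uv_adj => ->; rewrite adj_irr. Qed.

Let restrict (A : {set T}) := A :\ u :\ v.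
Let extend (B : {set T}) :=
  B :|: [set x | ((x == u) && nbr_parity adj B v) || ((x == v) && nbr_parity adj B u)].

(* For A even, the parity conditions at u and v read v \in A and u \in A in
   terms of restrict A, so A is recovered from restrict A; the conditions at
   the other vertices become those of the pivoted graph. *)
Lemma restrict_even A : A \in even_sets adj V ->
  restrict A \in even_sets adj' V' /\ extend (restrict A) = A.
Proof.
rewrite inE => /andP[AV /forall_inP A_even].
have par_u : nbr_parity adj (restrict A) u = (v \in A).
  have := A_even u uV; rewrite (nbr_parityD2 _ _ _ u_neq_v) adj_irr (adjC v u) uv_adj.
  by rewrite andbF andbT; case: nbr_parity; case: (v \in A).
have par_v : nbr_parity adj (restrict A) v = (u \in A).
  have := A_even v vV; rewrite (nbr_parityD2 _ _ _ u_neq_v) adj_irr uv_adj.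
  by rewrite andbF andbT; case: nbr_parity; case: (u \in A).
split.
  rewrite inE; apply/andP; split; first by rewrite !setSD.
  apply/forall_inP => t; rewrite !inE => /and3P[_ _ tV].
  have := A_even t tV; rewrite /adj' nbr_parity_pivot par_u par_v.
  rewrite (nbr_parityD2 _ _ _ u_neq_v).
  by case: nbr_parity; case: (u \in A); case: (v \in A); case: (adj u t); case: (adj v t).
apply/setP => x; rewrite !inE par_u par_v.
have [->|xu] := eqVneq x u; first by rewrite (negbTE u_neq_v) /=; case: (u \in A).
by have [->|xv] := eqVneq x v; [case: (v \in A) | case: (x \in A)].
Qed.

Lemma extend_even B : B \in even_sets adj' V' ->
  extend B \in even_sets adj V /\ restrict (extend B) = B.
Proof.
rewrite inE => /andP[BV' /forall_inP B_even].
have uNB : u \notin B by apply/negP => /(subsetP BV'); rewrite !inE eqxx andbF.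
have vNB : v \notin B by apply/negP => /(subsetP BV'); rewrite !inE eqxx.
have restrictK : restrict (extend B) = B.
  apply/setP => x; rewrite !inE.
  have [->|xv] := eqVneq x v; first by rewrite (negbTE vNB).
  by have [->|xu] := eqVneq x u; [rewrite (negbTE uNB) | case: (x \in B)].
have u_ext : (u \in extend B) = nbr_parity adj B v.
  by rewrite !inE (negbTE uNB) eqxx (negbTE u_neq_v) /= orbF.
have v_ext : (v \in extend B) = nbr_parity adj B u.
  by rewrite !inE (negbTE vNB) eqxx eq_sym (negbTE u_neq_v).
split => //; rewrite inE; apply/andP; split.
  apply/subsetP => x; rewrite !inE.
  case/orP=> [/(subsetP BV')|/orP[/andP[/eqP->]|/andP[/eqP->]]] //.
  by rewrite !inE => /and3P[].
apply/forall_inP => t tV.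
rewrite (nbr_parityD2 _ _ _ u_neq_v) -/(restrict _) restrictK u_ext v_ext.
have [->|tu] := eqVneq t u.
  by rewrite adj_irr (adjC v u) uv_adj andbF andbT; case: nbr_parity.
have [->|tv] := eqVneq t v; first by rewrite adj_irr uv_adj andbF andbT; case: nbr_parity.
have := B_even t; rewrite !inE tu tv tV /adj' nbr_parity_pivot => /(_ isT).
by case: (nbr_parity adj B t); case: (nbr_parity adj B u); case: (nbr_parity adj B v);
  case: (adj u t); case: (adj v t).
Qed.

Lemma card_even_sets_pivot : #|even_sets adj V| = #|even_sets adj' V'|.
Proof.
have restrict_inj : {in even_sets adj V &, injective restrict}.
  move=> A1 A2 /restrict_even[_ A1K] /restrict_even[_ A2K] eq12.
  by rewrite -A1K -A2K eq12.
rewrite -(card_in_imset restrict_inj); apply: eq_card => B.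
apply/imsetP/idP => [[A /restrict_even[A'_even _] ->] //|B_even].
by exists (extend B); [exact: (extend_even B_even).1 | rewrite (extend_even B_even).2].
Qed.

End PivotBijection.

Lemma card_even_sets (T : finType) (adj : rel T) (V : {set T}) :
  symmetric adj -> irreflexive adj ->
  exists2 r, (2 * r <= #|V|)%N & #|even_sets adj V| = (2 ^ (#|V| - 2 * r))%N.
Proof.
elim: {V}_.+1 {-2}V (ltnSn #|V|) adj => // N IH V ltVN adj adjC adj_irr.
have [/exists_inP[u uV /exists_inP[v vV uv_adj]]|noedge] :=
  boolP [exists u in V, exists v in V, adj u v]; last first.
  exists 0%N => //; rewrite subn0 even_sets_edgeless ?card_powerset // => u v uV vV.
  apply/negbTE; apply: contra noedge => uv_adj.
  by apply/exists_inP; exists u => //; apply/exists_inP; exists v.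
have u_neq_v : u != v by apply: contraTneq uv_adj => ->; rewrite adj_irr.
have cardV : #|V| = (#|V :\ u :\ v|).+2.
  by rewrite (cardsD1 u V) uV (cardsD1 v (V :\ u)) !inE eq_sym u_neq_v vV.
have [|r le_r card_r] :=
  IH (V :\ u :\ v) _ (pivot adj u v) (pivot_sym u v adjC) (pivot_irr u v adjC adj_irr).
  lia.
exists r.+1; first lia.
rewrite (card_even_sets_pivot adjC adj_irr uV vV uv_adj) card_r cardV.
by congr (2 ^ _)%N; lia.
Qed.

Lemma even_sets_matching (T : finType) (adj : rel T) :
  symmetric adj -> (forall s t t', adj s t -> adj s t' -> t = t') ->
  even_sets adj setT = powerset [set s | [forall t, ~~ adj s t]].
Proof.
move=> adjC adj_functional; apply/setP => A; rewrite !inE subsetT /=.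
apply/forall_inP/subsetP => [A_even s sA | A_isolated t _].
  rewrite inE; apply/forallP => t; apply/negP => st.
  have := A_even t (in_setT t); rewrite /nbr_parity (big_setD1 s sA) st big1 // => s'.
  rewrite !inE => /andP[s'_neq_s _]; apply/negbTE; apply: contra s'_neq_s => s't.
  by apply/eqP/(adj_functional t); rewrite adjC.
rewrite /nbr_parity big1 // => s /A_isolated; rewrite inE => /forallP/(_ t).
exact: negbTE.
Qed.

Section MatchingGraph.
Variables k m : nat.

Lemma Gkm_sym : symmetric (Gkm k m).
Proof.
move=> i j; rewrite /Gkm eq_sym [(j./2 == _)]eq_sym.
by case: (i < 2 * k)%N; case: (j < 2 * k)%N.
Qed.

Lemma Gkm_irr : irreflexive (Gkm k m).
Proof. by move=> i; rewrite /Gkm eqxx !andbF. Qed.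

Lemma Gkm_functional s t t' : Gkm k m s t -> Gkm k m s t' -> t = t'.
Proof.
rewrite /Gkm -!divn2 => /and4P[_ _ st /eqP st2] /and4P[_ _ st' /eqP st'2].
apply/eqP; move: st st'; rewrite -!val_eqE /=; lia.
Qed.

Lemma Gkm_isolated :
  [set s | [forall t, ~~ Gkm k m s t]] = [set s : 'I_(2 * k + m) | (2 * k <= s)%N].
Proof.
apply/setP => s; rewrite !inE; apply/forallP/idP => [s_isolated|le_s t]; last first.
  by rewrite /Gkm ltnNge le_s.
rewrite leqNgt; apply/negP => lt_s.
pose partner := if odd s then s.-1 else s.+1.
have lt_partner : (partner < 2 * k + m)%N by rewrite /partner; case: ifP; lia.
have := s_isolated (Ordinal lt_partner).
rewrite /Gkm /= lt_s -val_eqE /= -!divn2 /partner.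
by have := odd_double_half s; rewrite -divn2; case: ifP => odd_s; lia.
Qed.

Lemma card_Gkm_isolated : #|[set s : 'I_(2 * k + m) | (2 * k <= s)%N]| = m.
Proof.
have -> : [set s : 'I_(2 * k + m) | (2 * k <= s)%N] = @rshift (2 * k) m @: [set: 'I_m].
  apply/setP => s; rewrite inE; apply/idP/imsetP => [le_s|[j _ ->]]; last exact: leq_addr.
  have lt_s : (s - 2 * k < m)%N by have := ltn_ord s; lia.
  by exists (Ordinal lt_s); rewrite ?inE //; apply: val_inj => /=; lia.
by rewrite card_imset ?cardsT ?card_ord //; exact: rshift_inj.
Qed.

Lemma dim_center_Gkm : dim_center (Gkm k m) = (2 ^ m)%N.
Proof.
rewrite dim_center_central_sets central_setsE; [|exact: Gkm_sym|exact: Gkm_irr].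
rewrite even_sets_matching; [|exact: Gkm_sym|exact: Gkm_functional].
by rewrite Gkm_isolated card_powerset card_Gkm_isolated.
Qed.

End MatchingGraph.

Theorem mainTheorem3 (n : nat) (adj : rel 'I_n) :
  (1 <= n)%N -> simple_graph adj ->
  exists! km : nat * nat,
    (2 * km.1 + km.2 = n)%N /\
    dim_center (Gkm km.1 km.2) = dim_center adj.
Proof.
move=> _ [adjC adj_irr].
have [r le_r card_r] := card_even_sets [set: 'I_n] adjC adj_irr.
rewrite cardsT card_ord in le_r card_r.
have dim_adj : dim_center adj = (2 ^ (n - 2 * r))%N.
  by rewrite dim_center_central_sets central_setsE.
exists (r, n - 2 * r); split => [|[k' m'] /= [sum_km]]; rewrite dim_center_Gkm dim_adj.
  by split => //=; lia.
by move/expnI => /(_ isT) m'E; congr pair; lia.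
Qed.
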